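(* Let $\alpha>0$ and let $m$ be an integer with $m\ge\max\{4\alpha+3,\,16\alpha^2+8\alpha+1\}$. Let $(M,g_\alpha)$ be the manifold $\mathbb{R}^m\times S^1$ with metric $g_\alpha=dr^2+f(r)^2ds_{m-1}^2+h(r)^2ds_1^2$, where $(r,u)\in[0,\infty)\times S^{m-1}$ are polar coordinates on $\mathbb{R}^m$, $ds_k^2$ is the round metric of the unit sphere $S^k$, $f(r)=r(1+r^2)^{-1/4}$ and $h(r)=(1+r^2)^{-\alpha}$. Let $N$ be the Riemannian universal cover of $(M,g_\alpha)$. Let $p\in M$ be a point with $r(p)=0$, let $\gamma$ be a generator of $\pi_1(M,p)\cong\mathbb{Z}$ (acting on $N$ by deck transformations), and let $\tilde p\in N$ be a lift of $p$. Then for all positive integers $l\ge 9^{1+\frac{1}{2\alpha}}$, $$C\cdot l^{\frac{1}{1+2\alpha}}-2\le d(\gamma^l\tilde p,\tilde p)\le 9\cdot l^{\frac{1}{1+2\alpha}},$$ where $C=2\cdot 9^{-\frac{1}{2\alpha}}$.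
   Context: $d$ denotes the Riemannian distance on $N$ with the lifted metric. *)

From Stdlib Require Import Reals.
From Coquelicot Require Import Coquelicot.
Open Scope R_scope.

Fixpoint sumR (n : nat) (f : nat -> R) : R :=
  match n with
  | O => 0
  | S k => sumR k f + f k
  end.

Definition dotm (m : nat) (x y : nat -> R) : R := sumR m (fun i => x i * y i).

(* The metric g_alpha = dr^2 + f(r)^2 ds_{m-1}^2 + h(r)^2 ds_1^2, lifted to the
   universal cover N = R^m x R (covering map (x,t) |-> (x, e^{it})),
   written in Cartesian coordinates x on R^m and the angle coordinate t.
   With r = |x|, the radial part of v is (x.v)/r, the tangential part has
   squared Euclidean norm |v|^2 - (x.v)^2/r^2, and the round metric of the unit
   sphere scaled by r^2 gives  f(r)^2/r^2 * (|v|^2 - (x.v)^2/r^2).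
   Here f(r)^2 = r^2 (1+r^2)^(-1/2) and h(r)^2 = (1+r^2)^(-2 alpha).
   At r = 0 the metric extends smoothly as |v|^2 + h(0)^2 w^2. *)
Definition galpha (alpha : R) (m : nat) (x : nat -> R) (v : nat -> R) (w : R) : R :=
  let r2 := dotm m x x in
  let xv := dotm m x v in
  let vv := dotm m v v in
  let h2 := Rpower (1 + r2) (- (2 * alpha)) in
  if Req_EM_T r2 0 then vv + h2 * w ^ 2
  else xv ^ 2 / r2 + (r2 / sqrt (1 + r2)) / r2 * (vv - xv ^ 2 / r2) + h2 * w ^ 2.

(* C^1 curves in N = R^m x R (coordinate functions c s i for i < m, and z s),
   parametrized by [0,1]; C^1 on all of R (any C^1 curve on [0,1] extends). *)
Definition C1 (f : R -> R) : Prop :=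
  forall s, ex_derive f s /\ continuous (Derive f) s.

Definition curve_joins (m : nat) (c : R -> nat -> R) (z : R -> R)
  (p : (nat -> R) * R) (q : (nat -> R) * R) : Prop :=
  (forall i, (i < m)%nat -> C1 (fun s => c s i)) /\ C1 z /\
  (forall i, (i < m)%nat -> c 0 i = fst p i /\ c 1 i = fst q i) /\
  z 0 = snd p /\ z 1 = snd q.

Definition curve_length (alpha : R) (m : nat) (c : R -> nat -> R) (z : R -> R) : R :=
  RInt (fun s => sqrt (galpha alpha m (c s) (fun i => Derive (fun u => c u i) s)
                                   (Derive z s))) 0 1.

Definition dist_N (alpha : R) (m : nat) (p q : (nat -> R) * R) : Rbar :=
  Glb_Rbar (fun L => exists c z, curve_joins m c z p q /\ L = curve_length alpha m c z).

Definition origin : nat -> R := fun _ => 0.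

From Pilot Require Import Defs.
From Stdlib Require Import Reals Lra Lia Classical FunctionalExtensionality.
From Coquelicot Require Import Coquelicot.
Open Scope R_scope.

(* Lower bound: a curve from (0, t0 + 2 pi sigma l) to (0, t0) either reaches radius
   A, and then, since the metric dominates dr^2, has length at least 2A; or it stays
   in the ball r < A, where h >= (1 + A^2)^(-alpha), so that its S^1-component alone
   costs (1 + A^2)^(-alpha) 2 pi l.  Taking A = a - 1 with
   a = 9^(-1/(2 alpha)) l^(1/(1+2 alpha)), the second alternative is the larger one.
   Upper bound: with L = l^(1/(1+2 alpha)), go radially out to r = 11/10 L and back,
   performing the l turns only while r > L, where h <= L^(-2 alpha); the length is
   at most 11/5 L + 2 pi L^(-2 alpha) l = (11/5 + 2 pi) L <= 9 L. *)

Lemma sumR_ext n f g : (forall i, (i < n)%nat -> f i = g i) -> sumR n f = sumR n g.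
Proof.
  induction n as [|n IH]; intros H; simpl; [reflexivity|].
  rewrite (H n) by lia. rewrite IH by (intros; apply H; lia). reflexivity.
Qed.

Lemma sumR_ge0 n f : (forall i, (i < n)%nat -> 0 <= f i) -> 0 <= sumR n f.
Proof.
  induction n as [|n IH]; intros H; simpl; [lra|].
  assert (0 <= f n) by (apply H; lia).
  assert (0 <= sumR n f) by (apply IH; intros; apply H; lia).
  lra.
Qed.

Lemma sumR_plus n f g : sumR n (fun i => f i + g i) = sumR n f + sumR n g.
Proof. induction n as [|n IH]; simpl; [ring|]. rewrite IH. ring. Qed.

Lemma is_derive_sumR n (f : nat -> R -> R) df x :
  (forall i, (i < n)%nat -> is_derive (f i) x (df i)) ->
  is_derive (fun y => sumR n (fun i => f i y)) x (sumR n df).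
Proof.
  induction n as [|n IH]; intros H; simpl.
  - apply (is_derive_const 0).
  - apply (is_derive_plus (fun y => sumR n (fun i => f i y)) (f n));
      [apply IH; intros i Hi|]; apply H; lia.
Qed.

Lemma continuous_sumR n (f : nat -> R -> R) x :
  (forall i, (i < n)%nat -> continuous (f i) x) ->
  continuous (fun y => sumR n (fun i => f i y)) x.
Proof.
  induction n as [|n IH]; intros H; simpl.
  - apply continuous_const.
  - apply (continuous_plus (fun y => sumR n (fun i => f i y)) (f n));
      [apply IH; intros i Hi|]; apply H; lia.
Qed.

Lemma dotm_self_ge0 m x : 0 <= dotm m x x.
Proof. apply sumR_ge0. intros. nra. Qed.

Lemma dotm_comm m x y : dotm m x y = dotm m y x.
Proof. apply sumR_ext. intros. apply Rmult_comm. Qed.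

Lemma dotm_self_eq0 m x : (forall i, (i < m)%nat -> x i = 0) -> dotm m x x = 0.
Proof.
  intros H. unfold dotm. rewrite (sumR_ext m _ (fun _ => 0)).
  - induction m as [|m IH]; simpl; [reflexivity|]. rewrite IH by auto. ring.
  - intros i Hi. rewrite H by auto. ring.
Qed.

Lemma dotm_Cauchy_Schwarz m x y : (dotm m x y) ^ 2 <= dotm m x x * dotm m y y.
Proof.
  unfold dotm. induction m as [|m IH]; simpl; [lra|].
  set (A := sumR m (fun i => x i * x i)) in *.
  set (B := sumR m (fun i => y i * y i)) in *.
  set (C := sumR m (fun i => x i * y i)) in *.
  assert (HA : 0 <= A) by apply dotm_self_ge0.
  assert (HB : 0 <= B) by apply dotm_self_ge0.
  set (a := x m). set (b := y m).
  enough (0 <= A * b ^ 2 + a ^ 2 * B - 2 * a * b * C) by nra.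
  destruct (Req_dec A 0) as [H0|H0].
  - assert (C = 0) by (rewrite H0 in IH; nra). subst C. rewrite H0. nra.
  - (* A (A b^2 + a^2 B - 2abC) = (A b - a C)^2 + a^2 (A B - C^2) *)
    assert (0 <= (A * b - a * C) ^ 2) by apply pow2_ge_0.
    assert (0 <= a ^ 2 * (A * B - C ^ 2)) by (apply Rmult_le_pos; nra).
    nra.
Qed.

Definition axis0 (a : R) : nat -> R := fun i => if Nat.eqb i 0 then a else 0.

Lemma dotm_axis0 m a b : (0 < m)%nat -> dotm m (axis0 a) (axis0 b) = a * b.
Proof.
  unfold dotm, axis0. induction m as [|[|n] IH]; intros Hm; [lia|simpl; ring|].
  change (sumR (S (S n)) ?f) with (sumR (S n) f + f (S n)).
  rewrite IH by lia. simpl. ring.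
Qed.

Lemma Rpower_antitone x y e : 0 < x <= y -> e <= 0 -> Rpower y e <= Rpower x e.
Proof.
  intros Hxy He. replace e with (- - e) by ring. rewrite (Rpower_Ropp x), (Rpower_Ropp y).
  apply Rinv_le_contravar; [apply exp_pos|]. apply Rle_Rpower_l; lra.
Qed.

Lemma sqrt_plus_le x y : 0 <= x -> 0 <= y -> sqrt (x + y) <= sqrt x + sqrt y.
Proof.
  intros Hx Hy. pose proof (sqrt_pos x). pose proof (sqrt_pos y).
  rewrite <- (sqrt_pow2 (sqrt x + sqrt y)) by lra. apply sqrt_le_1_alt.
  pose proof (sqrt_sqrt x Hx). pose proof (sqrt_sqrt y Hy). nra.
Qed.

Section MetricBounds.

Variables (alpha : R) (m : nat) (x v : nat -> R) (w : R).

Let r2 := dotm m x x.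
Let xv := dotm m x v.
Let vv := dotm m v v.
Let h2 := Rpower (1 + r2) (- (2 * alpha)).

Let r2_ge0 : 0 <= r2. Proof. apply dotm_self_ge0. Qed.
Let vv_ge0 : 0 <= vv. Proof. apply dotm_self_ge0. Qed.
Let xv_sqr_le : xv ^ 2 <= r2 * vv. Proof. apply dotm_Cauchy_Schwarz. Qed.
Let h2_gt0 : 0 < h2. Proof. apply exp_pos. Qed.

Let galpha_unfold : galpha alpha m x v w =
  (if Req_EM_T r2 0 then vv
   else xv ^ 2 / r2 + (r2 / sqrt (1 + r2)) / r2 * (vv - xv ^ 2 / r2)) + h2 * w ^ 2.
Proof. unfold galpha. fold r2 xv vv h2. destruct (Req_EM_T r2 0); ring. Qed.

Let tangential_ge0 : r2 <> 0 -> 0 <= (r2 / sqrt (1 + r2)) / r2 * (vv - xv ^ 2 / r2).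
Proof.
  intros Hr. assert (0 < r2) by lra.
  assert (0 < sqrt (1 + r2)) by (apply sqrt_lt_R0; lra).
  assert (xv ^ 2 / r2 <= vv) by (apply Rle_div_l; lra).
  apply Rmult_le_pos; [|lra]. unfold Rdiv.
  repeat apply Rmult_le_pos; try lra; left; apply Rinv_0_lt_compat; lra.
Qed.

Lemma galpha_ge_twist : h2 * w ^ 2 <= galpha alpha m x v w.
Proof.
  rewrite galpha_unfold. destruct (Req_EM_T r2 0) as [|Hr]; [lra|].
  pose proof (tangential_ge0 Hr).
  assert (0 <= xv ^ 2 / r2) by (apply Rdiv_le_0_compat; [nra|lra]).
  lra.
Qed.

Lemma galpha_ge_radial eps : 0 < eps -> xv ^ 2 / (eps + r2) <= galpha alpha m x v w.
Proof.
  intros Heps. assert (0 <= h2 * w ^ 2) by nra.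
  rewrite galpha_unfold. destruct (Req_EM_T r2 0) as [Hr|Hr].
  - assert (Hxv : xv ^ 2 = 0) by (rewrite Hr in xv_sqr_le; nra).
    rewrite Hxv. unfold Rdiv. lra.
  - pose proof (tangential_ge0 Hr).
    assert (xv ^ 2 / (eps + r2) <= xv ^ 2 / r2)
      by (apply Rmult_le_compat_l; [nra|apply Rinv_le_contravar; lra]).
    lra.
Qed.

(* Unlike the definition, this form has no case split at r = 0, so it is visibly continuous. *)
Lemma galpha_smooth_form : galpha alpha m x v w =
  vv / sqrt (1 + r2) + xv ^ 2 / (sqrt (1 + r2) * (sqrt (1 + r2) + 1)) + h2 * w ^ 2.
Proof.
  assert (HS : 0 < sqrt (1 + r2)) by (apply sqrt_lt_R0; lra).
  assert (HS2 : sqrt (1 + r2) * sqrt (1 + r2) = 1 + r2) by (apply sqrt_sqrt; lra).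
  rewrite galpha_unfold. destruct (Req_EM_T r2 0) as [Hr|Hr].
  - assert (Hxv : xv ^ 2 = 0) by (rewrite Hr in xv_sqr_le; nra).
    rewrite Hxv, Hr, Rplus_0_r, sqrt_1. field.
  - set (S := sqrt (1 + r2)) in *. replace r2 with (S * S - 1) by lra.
    field. repeat split; lra.
Qed.

Lemma galpha_radial_vector : xv ^ 2 = r2 * vv -> galpha alpha m x v w = vv + h2 * w ^ 2.
Proof.
  intros Hxv. rewrite galpha_unfold. destruct (Req_EM_T r2 0) as [|Hr]; [reflexivity|].
  assert (sqrt (1 + r2) <> 0) by (apply Rgt_not_eq, sqrt_lt_R0; lra).
  rewrite Hxv. f_equal. field. split; assumption.
Qed.

End MetricBounds.

Lemma continuous_Rplus_comp (f g : R -> R) x :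
  continuous f x -> continuous g x -> continuous (fun y => f y + g y) x.
Proof. apply (continuous_plus f g). Qed.

Lemma continuous_Rmult_comp (f g : R -> R) x :
  continuous f x -> continuous g x -> continuous (fun y => f y * g y) x.
Proof. apply (continuous_mult f g). Qed.

Lemma continuous_Rpower_comp (f : R -> R) e x :
  continuous f x -> 0 < f x -> continuous (fun y => Rpower (f y) e) x.
Proof.
  intros Hf Hpos. unfold Rpower. apply continuous_exp_comp.
  apply continuous_Rmult_comp; [apply continuous_const|].
  apply (continuous_comp f ln); [exact Hf|]. apply continuous_ln, Hpos.
Qed.

Lemma continuous_C1 f s : Defs.C1 f -> continuous f s.
Proof. intros Hf. apply (ex_derive_continuous f), Hf. Qed.

Lemma Rabs_sub_le_RInt (f df g : R -> R) a b : a <= b ->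
  (forall x, a <= x <= b -> is_derive f x (df x)) ->
  (forall x, a <= x <= b -> continuous df x) ->
  ex_RInt g a b ->
  (forall x, a <= x <= b -> Rabs (df x) <= g x) ->
  Rabs (f b - f a) <= RInt g a b.
Proof.
  intros Hab Hf Hdf Hg Hle.
  assert (HI : is_RInt df a b (f b - f a)).
  { apply (is_RInt_derive f df); rewrite Rmin_left, Rmax_right by exact Hab; auto. }
  apply (norm_RInt_le df g a b _ _ Hab Hle HI).
  apply (RInt_correct (V := R_CompleteNormedModule)), Hg.
Qed.

Definition velocity (c : R -> nat -> R) (s : R) : nat -> R :=
  fun i => Derive (fun u => c u i) s.

Definition speed alpha m (c : R -> nat -> R) (z : R -> R) (s : R) : R :=
  sqrt (galpha alpha m (c s) (velocity c s) (Derive z s)).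

Section C1Curve.

Variables (alpha : R) (m : nat) (c : R -> nat -> R) (z : R -> R).
Hypothesis c_C1 : forall i, (i < m)%nat -> Defs.C1 (fun s => c s i).
Hypothesis z_C1 : Defs.C1 z.

Let continuous_dotm (a b : R -> nat -> R) s :
  (forall i, (i < m)%nat -> continuous (fun y => a y i) s) ->
  (forall i, (i < m)%nat -> continuous (fun y => b y i) s) ->
  continuous (fun y => dotm m (a y) (b y)) s.
Proof.
  intros Ha Hb. apply (continuous_sumR m (fun i y => a y i * b y i)).
  intros i Hi. apply continuous_Rmult_comp; auto.
Qed.

Let continuous_position i s : (i < m)%nat -> continuous (fun y => c y i) s.
Proof. intros Hi. apply continuous_C1, c_C1, Hi. Qed.

Let continuous_velocity i s : (i < m)%nat -> continuous (fun y => velocity c y i) s.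
Proof. intros Hi. apply c_C1, Hi. Qed.

Lemma continuous_speed s : continuous (speed alpha m c z) s.
Proof.
  set (r2 := fun y => dotm m (c y) (c y)).
  set (S := fun y => sqrt (1 + r2 y)).
  assert (Hr2 : continuous r2 s) by (apply continuous_dotm; auto).
  assert (Hxv : continuous (fun y => dotm m (c y) (velocity c y)) s)
    by (apply continuous_dotm; auto).
  assert (Hvv : continuous (fun y => dotm m (velocity c y) (velocity c y)) s)
    by (apply continuous_dotm; auto).
  assert (Hw : continuous (Derive z) s) by apply z_C1.
  assert (Hr2_ge0 : 0 <= r2 s) by apply dotm_self_ge0.
  assert (Hr2p : continuous (fun y => 1 + r2 y) s)
    by (apply continuous_Rplus_comp; [apply continuous_const|exact Hr2]).
  assert (HS : continuous S s) by (apply continuous_sqrt_comp, Hr2p).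
  assert (HS_gt0 : 0 < S s) by (apply sqrt_lt_R0; lra).
  apply continuous_ext with (f := fun y => sqrt (
     dotm m (velocity c y) (velocity c y) * / S y
     + (dotm m (c y) (velocity c y) * dotm m (c y) (velocity c y)) * / (S y * (S y + 1))
     + Rpower (1 + r2 y) (- (2 * alpha)) * (Derive z y * Derive z y))).
  { intros y. unfold speed, S, r2. rewrite galpha_smooth_form. f_equal. unfold Rdiv. simpl. ring. }
  apply continuous_sqrt_comp.
  repeat apply continuous_Rplus_comp; repeat apply continuous_Rmult_comp; auto.
  - apply continuous_Rinv_comp; [exact HS|lra].
  - apply continuous_Rinv_comp.
    + apply continuous_Rmult_comp; [exact HS|].
      apply continuous_Rplus_comp; [exact HS|apply continuous_const].
    + nra.
  - apply continuous_Rpower_comp; [exact Hr2p|lra].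
Qed.

Lemma ex_RInt_speed a b : ex_RInt (speed alpha m c z) a b.
Proof.
  apply (ex_RInt_continuous (V := R_CompleteNormedModule)). intros. apply continuous_speed.
Qed.

Let is_derive_dotm_self s :
  is_derive (fun y => dotm m (c y) (c y)) s (2 * dotm m (c s) (velocity c s)).
Proof.
  replace (2 * dotm m (c s) (velocity c s))
    with (sumR m (fun i => velocity c s i * c s i + c s i * velocity c s i)).
  - apply (is_derive_sumR m (fun i y => c y i * c y i)). intros i Hi.
    apply (is_derive_mult (fun y => c y i) (fun y => c y i));
      try (apply Derive_correct, c_C1, Hi).
    intros; apply Rmult_comm.
  - rewrite sumR_plus. fold (dotm m (velocity c s) (c s)) (dotm m (c s) (velocity c s)).
    rewrite dotm_comm. ring.
Qed.

(* [sqrt (delta^2 + |c|^2)] is a C^1 stand-in for the non-smooth radius [|c|]. *)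
Let is_derive_regularized_radius delta s : 0 < delta ->
  is_derive (fun y => sqrt (delta ^ 2 + dotm m (c y) (c y))) s
    (dotm m (c s) (velocity c s) / sqrt (delta ^ 2 + dotm m (c s) (c s))).
Proof.
  intros Hdelta. pose proof (dotm_self_ge0 m (c s)).
  assert (Hpos : 0 < delta ^ 2 + dotm m (c s) (c s)) by nra.
  assert (0 < sqrt (delta ^ 2 + dotm m (c s) (c s))) by (apply sqrt_lt_R0, Hpos).
  assert (H1 : is_derive (fun y => delta ^ 2 + dotm m (c y) (c y)) s
                 (0 + 2 * dotm m (c s) (velocity c s))).
  { apply (is_derive_plus (fun _ => delta ^ 2));
      [apply (@is_derive_const R_AbsRing R_NormedModule)|].
    apply is_derive_dotm_self. }
  replace (dotm m (c s) (velocity c s) / sqrt (delta ^ 2 + dotm m (c s) (c s)))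
    with ((0 + 2 * dotm m (c s) (velocity c s)) / (2 * sqrt (delta ^ 2 + dotm m (c s) (c s))))
    by (field; lra).
  exact (is_derive_sqrt _ _ _ H1 Hpos).
Qed.

Let continuous_regularized_radius_derive delta s : 0 < delta ->
  continuous (fun y => dotm m (c y) (velocity c y) / sqrt (delta ^ 2 + dotm m (c y) (c y))) s.
Proof.
  intros Hdelta. pose proof (dotm_self_ge0 m (c s)).
  apply continuous_Rmult_comp; [apply continuous_dotm; auto|].
  apply continuous_Rinv_comp.
  - apply continuous_sqrt_comp, continuous_Rplus_comp;
      [apply continuous_const|apply continuous_dotm; auto].
  - apply Rgt_not_eq, sqrt_lt_R0. nra.
Qed.

Let regularized_radius_derive_le_speed delta s : 0 < delta ->
  Rabs (dotm m (c s) (velocity c s) / sqrt (delta ^ 2 + dotm m (c s) (c s)))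
  <= speed alpha m c z s.
Proof.
  intros Hdelta. pose proof (dotm_self_ge0 m (c s)).
  assert (Hpos : 0 < delta ^ 2 + dotm m (c s) (c s)) by nra.
  assert (0 < sqrt (delta ^ 2 + dotm m (c s) (c s))) by (apply sqrt_lt_R0, Hpos).
  unfold speed. rewrite <- sqrt_Rsqr_abs. apply sqrt_le_1_alt.
  eapply Rle_trans;
    [|apply (galpha_ge_radial alpha m (c s) (velocity c s) (Derive z s) (delta ^ 2)); nra].
  right. unfold Rsqr. field_simplify; try lra.
  rewrite pow2_sqrt by lra. reflexivity.
Qed.

(* The metric dominates dr^2, and the radius goes 0 -> |c s0| -> 0. *)
Lemma RInt_speed_ge_radius s0 :
  (forall i, (i < m)%nat -> c 0 i = 0 /\ c 1 i = 0) -> 0 <= s0 <= 1 ->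
  2 * sqrt (dotm m (c s0) (c s0)) <= RInt (speed alpha m c z) 0 1.
Proof.
  intros Hends Hs0. apply Rle_plus_epsilon. intros eps Heps.
  set (delta := eps / 2). assert (Hdelta : 0 < delta) by (unfold delta; lra).
  set (phi := fun y => sqrt (delta ^ 2 + dotm m (c y) (c y))).
  set (dphi := fun y => dotm m (c y) (velocity c y) / sqrt (delta ^ 2 + dotm m (c y) (c y))).
  assert (Hphi_end : forall y, (forall i, (i < m)%nat -> c y i = 0) -> phi y = delta).
  { intros y Hy. unfold phi. rewrite dotm_self_eq0 by exact Hy.
    rewrite Rplus_0_r. apply sqrt_pow2. lra. }
  assert (Hphi0 : phi 0 = delta) by (apply Hphi_end; intros; apply Hends; auto).
  assert (Hphi1 : phi 1 = delta) by (apply Hphi_end; intros; apply Hends; auto).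
  assert (Hphi : forall a b, a <= b -> Rabs (phi b - phi a) <= RInt (speed alpha m c z) a b).
  { intros a b Hab. apply (Rabs_sub_le_RInt phi dphi); [exact Hab|..|apply ex_RInt_speed|];
      intros y _; [apply is_derive_regularized_radius | apply continuous_regularized_radius_derive
      | apply regularized_radius_derive_le_speed]; exact Hdelta. }
  pose proof (Hphi 0 s0 (proj1 Hs0)) as Hout. pose proof (Hphi s0 1 (proj2 Hs0)) as Hback.
  rewrite <- (RInt_Chasles _ 0 s0 1) by apply ex_RInt_speed.
  assert (sqrt (dotm m (c s0) (c s0)) <= phi s0)
    by (apply sqrt_le_1_alt; pose proof (pow2_ge_0 delta); lra).
  rewrite Rabs_minus_sym in Hback.
  pose proof (Rle_abs (phi s0 - phi 0)). pose proof (Rle_abs (phi s0 - phi 1)).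
  unfold delta, plus in *; simpl. lra.
Qed.

(* The metric dominates h(r)^2 dz^2. *)
Lemma RInt_speed_ge_twist K : 0 <= K ->
  (forall s, 0 <= s <= 1 -> K ^ 2 <= Rpower (1 + dotm m (c s) (c s)) (- (2 * alpha))) ->
  K * Rabs (z 1 - z 0) <= RInt (speed alpha m c z) 0 1.
Proof.
  intros HK Hh.
  replace (K * Rabs (z 1 - z 0)) with (Rabs (K * z 1 - K * z 0))
    by (rewrite <- Rmult_minus_distr_l, Rabs_mult, Rabs_pos_eq by exact HK; reflexivity).
  apply (Rabs_sub_le_RInt (fun y => K * z y) (fun y => K * Derive z y)); try lra.
  - intros y _. apply (is_derive_scal z), Derive_correct, z_C1.
  - intros y _. apply continuous_Rmult_comp; [apply continuous_const|apply z_C1].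
  - apply ex_RInt_speed.
  - intros s Hs. unfold speed.
    rewrite <- sqrt_Rsqr_abs. apply sqrt_le_1_alt.
    eapply Rle_trans; [|apply galpha_ge_twist].
    rewrite Rsqr_pow2, Rpow_mult_distr.
    apply Rmult_le_compat_r; [apply pow2_ge_0|auto].
Qed.

End C1Curve.

Lemma curve_length_ge_min alpha m c z Z0 Z1 A : 0 <= alpha -> 0 <= A ->
  curve_joins m c z (origin, Z0) (origin, Z1) ->
  Rmin (2 * A) (Rpower (1 + A ^ 2) (- alpha) * Rabs (Z1 - Z0)) <= curve_length alpha m c z.
Proof.
  intros Halpha HA [Hc [Hz [Hends [Hz0 Hz1]]]]. simpl in Hends, Hz0, Hz1.
  change (curve_length alpha m c z) with (RInt (speed alpha m c z) 0 1).
  destruct (classic (exists s, 0 <= s <= 1 /\ A ^ 2 <= dotm m (c s) (c s)))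
    as [[s [Hs Hfar]]|Hnear].
  - eapply Rle_trans; [apply Rmin_l|].
    eapply Rle_trans; [|apply (RInt_speed_ge_radius alpha m c z Hc Hz s Hends Hs)].
    rewrite <- (sqrt_pow2 A) at 1 by exact HA.
    apply Rmult_le_compat_l, sqrt_le_1_alt; lra.
  - eapply Rle_trans; [apply Rmin_r|]. rewrite <- Hz0, <- Hz1.
    apply RInt_speed_ge_twist; auto; [left; apply exp_pos|].
    intros s Hs. pose proof (dotm_self_ge0 m (c s)).
    assert (dotm m (c s) (c s) < A ^ 2) by (apply Rnot_le_lt; intro; apply Hnear; eauto).
    rewrite <- Rpower_pow by apply exp_pos.
    rewrite Rpower_mult. replace (- alpha * INR 2) with (- (2 * alpha)) by (simpl; ring).
    apply Rpower_antitone; lra.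
Qed.

Definition bump (s : R) : R := 4 * s * (1 - s).

(* Positive part of [bump s - 10/11]: the curve turns around the S^1 factor only
   while it is beyond 10/11 of its maximal radius. *)
Definition spin_rate (s : R) : R := ((bump s - 10 / 11) + Rabs (bump s - 10 / 11)) / 2.

Definition twist_profile (Z0 Z1 s : R) : R :=
  Z0 + (Z1 - Z0) * (RInt spin_rate 0 s / RInt spin_rate 0 1).

Definition radial_profile (R0 s : R) : nat -> R := axis0 (R0 * bump s).

Lemma is_derive_bump R0 s : is_derive (fun u => R0 * bump u) s (R0 * (4 - 8 * s)).
Proof. unfold bump. auto_derive; [exact I|ring]. Qed.

Lemma continuous_spin_rate s : continuous spin_rate s.
Proof.
  assert (Hb : continuous (fun y => bump y - 10 / 11) s).
  { apply (ex_derive_continuous (fun y => bump y - 10 / 11)). unfold bump. auto_derive. exact I. }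
  unfold spin_rate, Rdiv. apply continuous_Rmult_comp; [|apply continuous_const].
  apply continuous_Rplus_comp; [exact Hb|apply continuous_Rabs_comp, Hb].
Qed.

Lemma ex_RInt_spin_rate a b : ex_RInt spin_rate a b.
Proof.
  apply (ex_RInt_continuous (V := R_CompleteNormedModule)). intros. apply continuous_spin_rate.
Qed.

Lemma spin_rate_ge0 s : 0 <= spin_rate s.
Proof.
  unfold spin_rate. pose proof (Rle_abs (- (bump s - 10 / 11))).
  rewrite Rabs_Ropp in *. lra.
Qed.

Lemma bump_gt_of_spin_rate_gt0 s : 0 < spin_rate s -> 10 / 11 < bump s.
Proof. unfold spin_rate, Rabs. destruct (Rcase_abs (bump s - 10 / 11)); lra. Qed.

Lemma RInt_spin_rate_gt0 : 0 < RInt spin_rate 0 1.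
Proof.
  rewrite <- (RInt_Chasles spin_rate 0 (2 / 5) 1), <- (RInt_Chasles spin_rate (2 / 5) (3 / 5) 1)
    by apply ex_RInt_spin_rate.
  assert (0 <= RInt spin_rate 0 (2 / 5))
    by (apply RInt_ge_0; [lra|apply ex_RInt_spin_rate|intros; apply spin_rate_ge0]).
  assert (0 <= RInt spin_rate (3 / 5) 1)
    by (apply RInt_ge_0; [lra|apply ex_RInt_spin_rate|intros; apply spin_rate_ge0]).
  assert (Hmid : RInt (fun _ => 1 / 20) (2 / 5) (3 / 5) <= RInt spin_rate (2 / 5) (3 / 5)).
  { apply RInt_le; [lra|apply ex_RInt_const|apply ex_RInt_spin_rate|].
    intros s Hs. unfold spin_rate, bump.
    pose proof (Rle_abs (4 * s * (1 - s) - 10 / 11)). nra. }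
  rewrite RInt_const in Hmid. unfold scal in Hmid; simpl in Hmid.
  unfold mult in Hmid; simpl in Hmid.
  unfold plus; simpl. lra.
Qed.

Lemma is_derive_twist_profile Z0 Z1 s :
  is_derive (twist_profile Z0 Z1) s ((Z1 - Z0) / RInt spin_rate 0 1 * spin_rate s).
Proof.
  apply (is_derive_ext (fun y => Z0 + (Z1 - Z0) / RInt spin_rate 0 1 * RInt spin_rate 0 y)).
  { intros y. unfold twist_profile, Rdiv.
    rewrite (Rmult_comm (RInt spin_rate 0 y)), Rmult_assoc. reflexivity. }
  replace ((Z1 - Z0) / RInt spin_rate 0 1 * spin_rate s)
    with (0 + (Z1 - Z0) / RInt spin_rate 0 1 * spin_rate s) by ring.
  apply (is_derive_plus (fun _ => Z0)); [apply (@is_derive_const R_AbsRing R_NormedModule)|].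
  apply (is_derive_scal (fun y => RInt spin_rate 0 y)).
  apply (is_derive_RInt (V := R_CompleteNormedModule) spin_rate _ 0).
  - apply filter_forall. intros.
    apply (RInt_correct (V := R_CompleteNormedModule)), ex_RInt_spin_rate.
  - apply continuous_spin_rate.
Qed.

Lemma C1_twist_profile Z0 Z1 : Defs.C1 (twist_profile Z0 Z1).
Proof.
  intros s. split; [eexists; apply is_derive_twist_profile|].
  apply continuous_ext with (f := fun y => (Z1 - Z0) / RInt spin_rate 0 1 * spin_rate y).
  - intros y. symmetry. apply is_derive_unique, is_derive_twist_profile.
  - apply continuous_Rmult_comp; [apply continuous_const|apply continuous_spin_rate].
Qed.

Lemma C1_radial_profile R0 i : Defs.C1 (fun s => radial_profile R0 s i).
Proof.
  unfold radial_profile, axis0. destruct (Nat.eqb i 0); intros s; split.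
  - eexists; apply is_derive_bump.
  - apply continuous_ext with (f := fun y => R0 * (4 - 8 * y)).
    + intros y. symmetry. apply is_derive_unique, is_derive_bump.
    + apply (ex_derive_continuous (fun y => R0 * (4 - 8 * y))). auto_derive. exact I.
  - eexists; apply (@is_derive_const R_AbsRing R_NormedModule).
  - apply continuous_ext with (f := fun _ => 0); [|apply continuous_const].
    intros y. symmetry. apply Derive_const.
Qed.

Lemma velocity_radial_profile R0 s :
  velocity (radial_profile R0) s = axis0 (R0 * (4 - 8 * s)).
Proof.
  apply functional_extensionality. intros i. unfold velocity, radial_profile, axis0.
  destruct (Nat.eqb i 0); [apply is_derive_unique, is_derive_bump|apply Derive_const].
Qed.

Lemma curve_joins_profiles m R0 Z0 Z1 :
  curve_joins m (radial_profile R0) (twist_profile Z0 Z1) (origin, Z0) (origin, Z1).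
Proof.
  pose proof RInt_spin_rate_gt0.
  split; [intros; apply C1_radial_profile|]. split; [apply C1_twist_profile|].
  split.
  - intros i Hi. unfold radial_profile, axis0, origin, bump. simpl.
    destruct (Nat.eqb i 0); split; ring.
  - unfold twist_profile. simpl. rewrite RInt_point. unfold zero. simpl.
    split; field; lra.
Qed.

Lemma speed_profiles alpha m R0 Z0 Z1 s : (0 < m)%nat ->
  speed alpha m (radial_profile R0) (twist_profile Z0 Z1) s =
  sqrt ((R0 * (4 - 8 * s)) ^ 2
        + Rpower (1 + (R0 * bump s) * (R0 * bump s)) (- (2 * alpha))
          * ((Z1 - Z0) / RInt spin_rate 0 1 * spin_rate s) ^ 2).
Proof.
  intros Hm. unfold speed.
  rewrite velocity_radial_profile, (is_derive_unique _ _ _ (is_derive_twist_profile Z0 Z1 s)).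
  rewrite galpha_radial_vector; unfold radial_profile; rewrite !dotm_axis0 by exact Hm;
    [f_equal; f_equal; ring | ring].
Qed.

(* The turning happens at radius [R0 * bump s > L], where [h <= L^(-2 alpha)]. *)
Lemma speed_profiles_le alpha m L Z0 Z1 s : (0 < m)%nat -> 0 <= alpha -> 0 < L ->
  speed alpha m (radial_profile (11 / 10 * L)) (twist_profile Z0 Z1) s <=
  11 / 10 * L * Rabs (4 - 8 * s)
  + Rpower L (- (2 * alpha)) * Rabs ((Z1 - Z0) / RInt spin_rate 0 1) * spin_rate s.
Proof.
  intros Hm Halpha HL. rewrite speed_profiles by exact Hm.
  set (R0 := 11 / 10 * L). set (k := (Z1 - Z0) / RInt spin_rate 0 1).
  set (h2 := Rpower (1 + R0 * bump s * (R0 * bump s)) (- (2 * alpha))).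
  assert (Hh2 : 0 < h2) by apply exp_pos.
  pose proof (spin_rate_ge0 s) as Hspin.
  eapply Rle_trans.
  { apply sqrt_plus_le; [apply pow2_ge_0|]. pose proof (pow2_ge_0 (k * spin_rate s)). nra. }
  apply Rplus_le_compat.
  - rewrite <- Rsqr_pow2, sqrt_Rsqr_abs, Rabs_mult, (Rabs_pos_eq R0) by (unfold R0; lra). lra.
  - rewrite sqrt_mult_alt by lra.
    rewrite <- Rsqr_pow2, sqrt_Rsqr_abs, Rabs_mult, (Rabs_pos_eq (spin_rate s)) by exact Hspin.
    destruct Hspin as [Hspin|Hspin]; [|rewrite <- Hspin; lra].
    pose proof (bump_gt_of_spin_rate_gt0 s Hspin).
    assert (sqrt h2 <= Rpower L (- (2 * alpha))).
    { rewrite <- (sqrt_pow2 (Rpower L (- (2 * alpha)))) by (left; apply exp_pos).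
      apply sqrt_le_1_alt. simpl. rewrite Rmult_1_r, Rpower_mult_distr by exact HL.
      apply Rpower_antitone; [|lra]. unfold R0. assert (L < 11 / 10 * L * bump s) by nra. nra. }
    pose proof (Rabs_pos k). pose proof (sqrt_pos h2).
    assert (sqrt h2 * Rabs k <= Rpower L (- (2 * alpha)) * Rabs k)
      by (apply Rmult_le_compat_r; assumption).
    nra.
Qed.

Lemma RInt_abs_bump_derive : RInt (fun s => Rabs (4 - 8 * s)) 0 1 = 2.
Proof.
  assert (Hup : is_RInt (fun s => Rabs (4 - 8 * s)) 0 (1 / 2) (minus 1 0)).
  { apply (is_RInt_ext (fun s => 4 - 8 * s)).
    - intros s Hs. rewrite Rmin_left, Rmax_right in Hs by lra. rewrite Rabs_right; lra.
    - replace (minus 1 0) with (minus ((fun s => 4 * s - 4 * s * s) (1 / 2))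
                                      ((fun s => 4 * s - 4 * s * s) 0))
        by (unfold minus, plus, opp; simpl; field).
      apply (is_RInt_derive (V := R_CompleteNormedModule) (fun s => 4 * s - 4 * s * s)); intros;
        [auto_derive; [exact I|ring]|].
      apply (ex_derive_continuous (fun s => 4 - 8 * s)). auto_derive. exact I. }
  assert (Hdown : is_RInt (fun s => Rabs (4 - 8 * s)) (1 / 2) 1 (minus 0 (-1))).
  { apply (is_RInt_ext (fun s => 8 * s - 4)).
    - intros s Hs. rewrite Rmin_left, Rmax_right in Hs by lra. rewrite Rabs_left; lra.
    - replace (minus 0 (-1)) with (minus ((fun s => 4 * s * s - 4 * s) 1)
                                         ((fun s => 4 * s * s - 4 * s) (1 / 2)))
        by (unfold minus, plus, opp; simpl; field).
      apply (is_RInt_derive (V := R_CompleteNormedModule) (fun s => 4 * s * s - 4 * s)); intros;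
        [auto_derive; [exact I|ring]|].
      apply (ex_derive_continuous (fun s => 8 * s - 4)). auto_derive. exact I. }
  rewrite (is_RInt_unique _ _ _ _ (is_RInt_Chasles _ _ _ _ _ _ Hup Hdown)).
  unfold minus, plus, opp. simpl. ring.
Qed.

Lemma curve_length_profiles_le alpha m L Z0 Z1 : (0 < m)%nat -> 0 <= alpha -> 0 < L ->
  curve_length alpha m (radial_profile (11 / 10 * L)) (twist_profile Z0 Z1)
  <= 2 * (11 / 10 * L) + Rpower L (- (2 * alpha)) * Rabs (Z1 - Z0).
Proof.
  intros Hm Halpha HL. pose proof RInt_spin_rate_gt0 as HW.
  change (curve_length alpha m _ _)
    with (RInt (speed alpha m (radial_profile (11 / 10 * L)) (twist_profile Z0 Z1)) 0 1).
  set (K := Rpower L (- (2 * alpha)) * Rabs ((Z1 - Z0) / RInt spin_rate 0 1)).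
  assert (Hradial : is_RInt (fun s => Rabs (4 - 8 * s)) 0 1 2).
  { rewrite <- RInt_abs_bump_derive.
    apply (RInt_correct (V := R_CompleteNormedModule)).
    apply (ex_RInt_continuous (V := R_CompleteNormedModule)).
    intros. apply continuous_Rabs_comp.
    apply (ex_derive_continuous (fun s => 4 - 8 * s)). auto_derive. exact I. }
  assert (Htwist : is_RInt spin_rate 0 1 (RInt spin_rate 0 1))
    by apply (RInt_correct (V := R_CompleteNormedModule)), ex_RInt_spin_rate.
  pose proof (is_RInt_plus _ _ _ _ _ _ (is_RInt_scal _ _ _ (11 / 10 * L) _ Hradial)
                (is_RInt_scal _ _ _ K _ Htwist)) as Hbound.
  eapply Rle_trans.
  { apply (RInt_le _ (fun s => 11 / 10 * L * Rabs (4 - 8 * s) + K * spin_rate s)); [lra| | |].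
    - apply ex_RInt_speed; [intros; apply C1_radial_profile|apply C1_twist_profile].
    - eexists; exact Hbound.
    - intros s _. apply speed_profiles_le; assumption. }
  replace (RInt (fun s => 11 / 10 * L * Rabs (4 - 8 * s) + K * spin_rate s) 0 1)
    with (11 / 10 * L * 2 + K * RInt spin_rate 0 1)
    by (symmetry; apply (is_RInt_unique (V := R_CompleteNormedModule)), Hbound).
  unfold K, Rdiv. rewrite Rabs_mult, Rabs_inv, (Rabs_pos_eq (RInt spin_rate 0 1)) by lra.
  right. field. lra.
Qed.

Lemma dist_N_axis_ge alpha m Z0 Z1 A : 0 <= alpha -> 0 <= A ->
  Rbar_le (Finite (Rmin (2 * A) (Rpower (1 + A ^ 2) (- alpha) * Rabs (Z1 - Z0))))
    (dist_N alpha m (origin, Z0) (origin, Z1)).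
Proof.
  intros Halpha HA. apply Glb_Rbar_correct. intros L [c [z [Hjoin ->]]].
  apply curve_length_ge_min; assumption.
Qed.

Lemma dist_N_axis_le alpha m Z0 Z1 L : (0 < m)%nat -> 0 <= alpha -> 0 < L ->
  Rbar_le (dist_N alpha m (origin, Z0) (origin, Z1))
    (Finite (2 * (11 / 10 * L) + Rpower L (- (2 * alpha)) * Rabs (Z1 - Z0))).
Proof.
  intros Hm Halpha HL.
  apply (Rbar_le_trans _
    (curve_length alpha m (radial_profile (11 / 10 * L)) (twist_profile Z0 Z1))).
  - apply Glb_Rbar_correct. do 2 eexists. split; [apply curve_joins_profiles|reflexivity].
  - apply curve_length_profiles_le; assumption.
Qed.

Lemma Rabs_deck_shift t0 sigma l : (sigma = 1 \/ sigma = -1) ->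
  Rabs (t0 - (t0 + sigma * 2 * PI * INR l)) = 2 * PI * INR l.
Proof.
  intros Hsigma. pose proof PI_RGT_0. pose proof (pos_INR l).
  destruct Hsigma; subst sigma; [rewrite Rabs_left1|rewrite Rabs_right]; nra.
Qed.

Lemma PI_le_17_5 : PI <= 17 / 5.
Proof.
  destruct (PI_ineq 2) as [_ H]. unfold tg_alt, PI_tg in H. simpl in H.
  repeat match type of H with context [INR (S ?n)] => rewrite (S_INR n) in H end.
  simpl in H. lra.
Qed.

(* The exponent 1/(1+2 alpha) balances the radial cost L against the twist cost L^(-2 alpha) l. *)
Lemma Rpower_balance alpha l : 0 < l -> 0 < alpha ->
  Rpower (Rpower l (1 / (1 + 2 * alpha))) (- (2 * alpha)) * l = Rpower l (1 / (1 + 2 * alpha)).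
Proof.
  intros Hl Halpha. rewrite Rpower_mult.
  rewrite <- (Rpower_1 l) at 2 by exact Hl. rewrite <- Rpower_plus.
  f_equal. field. lra.
Qed.

Lemma upper_bound_arith alpha l : 0 < l -> 0 < alpha ->
  2 * (11 / 10 * Rpower l (1 / (1 + 2 * alpha)))
  + Rpower (Rpower l (1 / (1 + 2 * alpha))) (- (2 * alpha)) * (2 * PI * l)
  <= 9 * Rpower l (1 / (1 + 2 * alpha)).
Proof.
  intros Hl Halpha. pose proof PI_le_17_5.
  pose proof (Rpower_balance alpha l Hl Halpha) as Hbalance.
  set (L := Rpower l (1 / (1 + 2 * alpha))) in *. assert (0 < L) by apply exp_pos.
  replace (Rpower L (- (2 * alpha)) * (2 * PI * l))
    with (2 * PI * (Rpower L (- (2 * alpha)) * l)) by ring.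
  rewrite Hbalance. nra.
Qed.

(* The escape radius is [a - 1] with [a = 9^(-1/(2 alpha)) l^(1/(1+2 alpha))],
   chosen so that staying inside the ball costs [9 * 2 pi l^(1/(1+2 alpha)) >= 2 a]. *)
Lemma lower_bound_arith alpha l : 0 < l -> 0 < alpha -> l >= Rpower 9 (1 + 1 / (2 * alpha)) ->
  let a := Rpower 9 (- (1 / (2 * alpha))) * Rpower l (1 / (1 + 2 * alpha)) in
  1 <= a /\
  2 * a - 2 <= Rmin (2 * (a - 1)) (Rpower (1 + (a - 1) ^ 2) (- alpha) * (2 * PI * l)).
Proof.
  intros Hl Halpha Hl9 a.
  set (L := Rpower l (1 / (1 + 2 * alpha))). set (A9 := Rpower 9 (- (1 / (2 * alpha)))).
  assert (HL : 0 < L) by apply exp_pos. assert (HA9 : 0 < A9) by apply exp_pos.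
  assert (Ha1 : 1 <= a).
  { assert (Rpower 9 (1 / (2 * alpha)) <= L).
    { replace (1 / (2 * alpha)) with ((1 + 1 / (2 * alpha)) * (1 / (1 + 2 * alpha)))
        by (field; lra).
      rewrite <- Rpower_mult. apply Rle_Rpower_l; [left; apply Rdiv_lt_0_compat; lra|].
      split; [apply exp_pos|lra]. }
    assert (A9 * Rpower 9 (1 / (2 * alpha)) = 1).
    { unfold A9. rewrite <- Rpower_plus, Rplus_opp_l. apply Rpower_O. lra. }
    unfold a. fold A9 L. nra. }
  split; [exact Ha1|]. apply Rmin_glb; [lra|].
  assert (HA9le : A9 <= 1).
  { unfold A9. apply Rle_trans with (Rpower 9 0); [|rewrite Rpower_O; lra].
    apply Rle_Rpower; [lra|].
    assert (0 < 1 / (2 * alpha)) by (apply Rdiv_lt_0_compat; lra). lra. }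
  assert (Ha_pow : Rpower a (- (2 * alpha)) = 9 * Rpower L (- (2 * alpha))).
  { unfold a. fold A9 L. rewrite <- Rpower_mult_distr by assumption. f_equal.
    unfold A9. rewrite Rpower_mult.
    replace (- (1 / (2 * alpha)) * - (2 * alpha)) with 1 by (field; lra).
    apply Rpower_1. lra. }
  assert (Hinside : Rpower a (- (2 * alpha)) <= Rpower (1 + (a - 1) ^ 2) (- alpha)).
  { replace (- (2 * alpha)) with (- alpha + - alpha) by ring.
    rewrite Rpower_plus, Rpower_mult_distr by lra.
    apply Rpower_antitone; [split|]; nra. }
  pose proof PI2_3_2. pose proof (Rpower_balance alpha l Hl Halpha) as Hbalance. fold L in Hbalance.
  assert (a <= L) by (unfold a; fold A9 L; nra).
  assert (0 < 2 * PI * l) by nra.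
  assert (9 * Rpower L (- (2 * alpha)) * (2 * PI * l) = 18 * PI * L)
    by (rewrite <- Hbalance at 2; ring).
  nra.
Qed.

Theorem lemma1p1 (alpha : R) (m l : nat) (t0 sigma : R) :
  0 < alpha ->
  INR m >= 4 * alpha + 3 ->
  INR m >= 16 * alpha ^ 2 + 8 * alpha + 1 ->
  (sigma = 1 \/ sigma = -1) ->
  (0 < l)%nat ->
  INR l >= Rpower 9 (1 + 1 / (2 * alpha)) ->
  let d := dist_N alpha m (origin, t0 + sigma * 2 * PI * INR l) (origin, t0) in
  let C := 2 * Rpower 9 (- (1 / (2 * alpha))) in
  Rbar_le (Finite (C * Rpower (INR l) (1 / (1 + 2 * alpha)) - 2)) d /\
  Rbar_le d (Finite (9 * Rpower (INR l) (1 / (1 + 2 * alpha)))).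
Proof.
  intros Halpha Hm _ Hsigma Hl Hl9 d C.
  assert (Hm0 : (0 < m)%nat) by (destruct m; [simpl in Hm; lra|lia]).
  assert (Hl0 : 0 < INR l) by (apply lt_0_INR, Hl).
  unfold d, C. split.
  - destruct (lower_bound_arith alpha (INR l) Hl0 Halpha Hl9) as [Ha1 Hlow].
    set (a := Rpower 9 (- (1 / (2 * alpha))) * Rpower (INR l) (1 / (1 + 2 * alpha))) in *.
    eapply Rbar_le_trans; [|apply (dist_N_axis_ge alpha m _ _ (a - 1)); lra].
    rewrite Rabs_deck_shift by exact Hsigma. refine (Rle_trans _ _ _ _ Hlow). unfold a. lra.
  - eapply Rbar_le_trans; [apply dist_N_axis_le; [exact Hm0|lra|apply exp_pos]|].
    rewrite Rabs_deck_shift by exact Hsigma. apply upper_bound_arith; assumption.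
Qed.
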